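(* Let $\overline{\mathcal R}_{Moon}$ be the function obtained from the lunar disturbing function expansion $$\mathcal R_k=\sum_{l\ge 2}\sum_{m,p,s,q=0}^{l}\sum_{j,r\in\mathbb Z}(-1)^{m+s}(-1)^{[m/2]}\frac{\mathcal G m_k\,\epsilon_m\epsilon_s}{2a_k}\frac{(l-s)!}{(l+m)!}\left(\frac{a}{a_k}\right)^{l}F_{lmp}(I)F_{lsq}(I_k)H_{lpj}(e)G_{lqr}(e_k)$$ $$\times\Big\{(-1)^{k_2}U_l^{m,-s}\cos\big(\bar\theta_{lmpj}+\bar\theta'_{lsqr}-y_s\pi\big)+(-1)^{k_3}U_l^{m,s}\cos\big(\bar\theta_{lmpj}-\bar\theta'_{lsqr}-y_s\pi\big)\Big\}$$ by keeping only the terms with $l=2$ and averaging over the mean anomalies $M$ of the point mass and $M_k$ of the Moon (i.e. keeping only the terms with $l-2p+j=0$ and $l-2q+r=0$). Let $\overline{\mathcal R}_{Sun}$ be obtained in the same way from the solar expansion $$\mathcal R^{*}=\mathcal G m^{*}\sum_{l\ge 2}\sum_{m=0}^{l}\sum_{p=0}^{l}\sum_{h=0}^{l}\sum_{q,j\in\mathbb Z}\frac{a^{l}}{(a^{*})^{l+1}}\epsilon_m\frac{(l-m)!}{(l+m)!}F_{lmp}(I)F_{lmh}(I^{*})H_{lpq}(e)G_{lhj}(e^{*})\cos\varphi_{lmphqj},$$ $$\varphi_{lmphqj}=(l-2p)\omega+(l-2p+q)M-(l-2h)\omega^{*}-(l-2h+j)M^{*}+m(\Omega-\Omega^{*}),$$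 by keeping only the terms with $l=2$ and averaging over $M$ and $M^{*}$ (i.e. keeping only terms with $l-2p+q=0$ and $l-2h+j=0$). Then $\overline{\mathcal R}_{Moon}$ does not depend on the argument of perigee $\omega_k$ of the Moon, and $\overline{\mathcal R}_{Sun}$ does not depend on the argument of perigee $\omega^{*}$ of the Sun.
   Context: $a,e,I,\omega,\Omega,M$ are the orbital elements (semi-major axis, eccentricity, inclination, argument of perigee, longitude of ascending node, mean anomaly) of an Earth-orbiting point mass referred to the celestial equator; $a_k,e_k,I_k,\omega_k,\Omega_k,M_k$ are the Moon's elements referred to the ecliptic, $m_k$ its mass; $a^*,e^*,I^*,\omega^*,\Omega^*,M^*$ are the Sun's elements referred to the celestial equator, $m^*$ its mass; $\mathcal G$ is the gravitational constant; $\varepsilon$ is the obliquity of the ecliptic. $\epsilon_m=1$ if $m=0$, $\epsilon_m=2$ otherwise. $\bar\theta_{lmpj}=(l-2p)\omega+(l-2p+j)M+m\Omega$, $\bar\theta'_{lsqr}=(l-2q)\omega_k+(l-2q+r)M_k+s(\Omega_k-\pi/2)$; $y_s=0$ for $s$ even, $1/2$ for $s$ odd; $t=(l-1)\bmod 2$, $k_2=t(m+s-1)+1$, $k_3=t(m+s)$; $U_l^{m,s}=\sum_{r=\max(0,-(m+s))}^{\min(l-s,l-m)}(-1)^{l-m-r}\binom{l+m}{m+s+r}\binom{l-m}{r}\cos^{m+s+2r}(\varepsilon/2)\sin^{-m-s+2(l-r)}(\varepsilon/2)$. Hansen coefficients $X_k^{n,m}(e)$ are defined by $(r/a)^n e^{imf}=\sum_{k\in\mathbb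 Z}X_k^{n,m}(e)e^{ikM}$ ($f$ true anomaly); $H_{lpj}(e)=X^{l,l-2p}_{l-2p+j}(e)$, $G_{lqr}(e')=X^{-(l+1),l-2q}_{l-2q+r}(e')$. $F_{lmp}(I)$ is Kaula's inclination function $F_{lmp}(I)=\sum_{t=0}^{\min\{p,[\frac{l-m}{2}]\}}\frac{(2l-2t)!}{t!(l-t)!(l-m-2t)!2^{2l-2t}}\sin^{l-m-2t}I\sum_{s=0}^{m}\binom{m}{s}\cos^{s}I\sum_{c}\binom{l-m-2t+s}{c}\binom{m-s}{p-t-c}(-1)^{c-[\frac{l-m}{2}]}$, with $[\cdot]$ the integer part and $c$ over all values making the binomials nonzero. *)

From Stdlib Require Import Reals ZArith List ClassicalEpsilon.
From Coquelicot Require Import Coquelicot.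
Import ListNotations.
Open Scope R_scope.

(* sumZ lo hi f = sum_{k = lo}^{hi} f k  (0 if hi < lo) *)
Definition sumZ (lo hi : Z) (f : Z -> R) : R :=
  fold_right Rplus 0
    (map (fun k : nat => f (lo + Z.of_nat k)%Z) (seq 0 (Z.to_nat (hi - lo + 1)))).

Definition binomZ (n k : Z) : R :=
  if ((0 <=? k)%Z && (k <=? n)%Z)%bool then Binomial.C (Z.to_nat n) (Z.to_nat k) else 0.

Definition factZ (n : Z) : R := INR (fact (Z.to_nat n)).

(* eccentric anomaly: the (unique, for 0 <= e < 1) solution E of E - e sin E = M *)
Definition ecc_anomaly (e M : R) : R :=
  epsilon (inhabits 0) (fun E => E - e * sin E = M).

Definition r_over_a (e M : R) : R := 1 - e * cos (ecc_anomaly e M).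

Definition true_anomaly (e M : R) : R :=
  2 * atan (sqrt ((1 + e) / (1 - e)) * tan (ecc_anomaly e M / 2)).

(* Hansen coefficient X_k^{n,m}(e): the k-th Fourier coefficient in M of
   (r/a)^n e^{i m f}.  It is real (the imaginary part vanishes by the
   symmetry M -> -M), so we define it as the real part
   (1/2pi) int_0^{2pi} (r/a)^n cos(m f - k M) dM. *)
Definition hansen (n m k : Z) (e : R) : R :=
  / (2 * PI) * RInt (fun M => powerRZ (r_over_a e M) n
                               * cos (IZR m * true_anomaly e M - IZR k * M)) 0 (2 * PI).

Definition Hcoef (l p j : Z) (e : R) : R := hansen l (l - 2 * p) (l - 2 * p + j) e.
Definition Gcoef (l q r : Z) (e : R) : R :=
  hansen (- (l + 1)) (l - 2 * q) (l - 2 * q + r) e.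

Definition kaulaF (l m p : Z) (I : R) : R :=
  sumZ 0 (Z.min p ((l - m) / 2)) (fun t =>
    factZ (2 * l - 2 * t)
      / (factZ t * factZ (l - t) * factZ (l - m - 2 * t) * 2 ^ Z.to_nat (2 * l - 2 * t))
    * sin I ^ Z.to_nat (l - m - 2 * t)
    * sumZ 0 m (fun s =>
        binomZ m s * cos I ^ Z.to_nat s
        (* c ranges over a superset of all values making the binomials nonzero;
           binomZ vanishes elsewhere *)
        * sumZ 0 (2 * l) (fun c =>
            binomZ (l - m - 2 * t + s) c * binomZ (m - s) (p - t - c)
            * powerRZ (-1) (c - (l - m) / 2)))).

Definition Ufun (eps : R) (l m s : Z) : R :=
  sumZ (Z.max 0 (- (m + s))) (Z.min (l - s) (l - m)) (fun r =>
    powerRZ (-1) (l - m - r) * binomZ (l + m) (m + s + r) * binomZ (l - m) r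
    * powerRZ (cos (eps / 2)) (m + s + 2 * r)
    * powerRZ (sin (eps / 2)) (- m - s + 2 * (l - r))).

Definition eps_idx (m : Z) : R := if (m =? 0)%Z then 1 else 2.
Definition y_idx (s : Z) : R := if Z.even s then 0 else 1 / 2.

(* Gc = gravitational constant, mk = lunar mass, eps = obliquity *)
Definition moon_term (Gc mk eps : R)
    (a e I om Om M : R) (ak ek Ik omk Omk Mk : R)
    (l m p s q j r : Z) : R :=
  let th := IZR (l - 2 * p) * om + IZR (l - 2 * p + j) * M + IZR m * Om in
  let th' := IZR (l - 2 * q) * omk + IZR (l - 2 * q + r) * Mk + IZR s * (Omk - PI / 2) in
  let t := ((l - 1) mod 2)%Z in
  let k2 := (t * (m + s - 1) + 1)%Z in
  let k3 := (t * (m + s))%Z in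
  powerRZ (-1) (m + s) * powerRZ (-1) (m / 2)
  * (Gc * mk * eps_idx m * eps_idx s / (2 * ak))
  * (factZ (l - s) / factZ (l + m))
  * (a / ak) ^ Z.to_nat l
  * kaulaF l m p I * kaulaF l s q Ik * Hcoef l p j e * Gcoef l q r ek
  * (powerRZ (-1) k2 * Ufun eps l m (- s) * cos (th + th' - y_idx s * PI)
     + powerRZ (-1) k3 * Ufun eps l m s * cos (th - th' - y_idx s * PI)).

(* averaged, l = 2 lunar disturbing function: keep l = 2 and the terms with
   l - 2p + j = 0 and l - 2q + r = 0 *)
Definition Rbar_Moon (Gc mk eps : R)
    (a e I om Om M : R) (ak ek Ik omk Omk Mk : R) : R :=
  sumZ 0 2 (fun m => sumZ 0 2 (fun p => sumZ 0 2 (fun s => sumZ 0 2 (fun q =>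
    moon_term Gc mk eps a e I om Om M ak ek Ik omk Omk Mk
      2 m p s q (2 * p - 2) (2 * q - 2))))).

Definition sun_term (Gc ms : R)
    (a e I om Om M : R) (as_ es Is oms Oms Ms : R)
    (l m p h q j : Z) : R :=
  let phi := IZR (l - 2 * p) * om + IZR (l - 2 * p + q) * M
             - IZR (l - 2 * h) * oms - IZR (l - 2 * h + j) * Ms
             + IZR m * (Om - Oms) in
  Gc * ms * (a ^ Z.to_nat l / as_ ^ Z.to_nat (l + 1))
  * eps_idx m * (factZ (l - m) / factZ (l + m))
  * kaulaF l m p I * kaulaF l m h Is * Hcoef l p q e * Gcoef l h j es
  * cos phi.

(* averaged, l = 2 solar disturbing function: l - 2p + q = 0, l - 2h + j = 0 *)
Definition Rbar_Sun (Gc ms : R)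
    (a e I om Om M : R) (as_ es Is oms Oms Ms : R) : R :=
  sumZ 0 2 (fun m => sumZ 0 2 (fun p => sumZ 0 2 (fun h =>
    sun_term Gc ms a e I om Om M as_ es Is oms Oms Ms
      2 m p h (2 * p - 2) (2 * h - 2)))).

From Stdlib Require Import Reals List Lra Lia ClassicalEpsilon Ranalysis5.
From Coquelicot Require Import Coquelicot.
Open Scope R_scope.

(* In the averaged quadrupole (l = 2) terms the Moon's (resp. Sun's) argument
   of perigee enters only through (2 - 2q) omega_k with q in {0, 1, 2}.  For
   q = 1 the coefficient vanishes; for q = 0, 2 the factor G_{2q(2q-2)} is the
   Hansen coefficient X_0^{-3,+-2}, which is zero: substituting the eccentric
   anomaly E for M, (a/r)^3 cos 2f dM becomes an exact differential in E,
   whose primitive is 2 pi-periodic. *)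

Definition kepler (e E : R) : R := E - e * sin E.

Lemma is_derive_kepler e E : is_derive (kepler e) E (1 - e * cos E).
Proof. unfold kepler; auto_derive; [easy | ring]. Qed.

Section Kepler.

Variable e : R.
Hypothesis He : 0 <= e < 1.

Lemma one_sub_ecos_gt0 E : 0 < 1 - e * cos E.
Proof. pose proof (COS_bound E); nra. Qed.

Lemma kepler_lt x y : x < y -> kepler e x < kepler e y.
Proof.
  intros Hxy.
  destruct (MVT_cor2 (kepler e) (fun E => 1 - e * cos E) x y Hxy) as [c [Hc _]].
  { intros E _; apply is_derive_Reals, is_derive_kepler. }
  pose proof (one_sub_ecos_gt0 c); nra.
Qed.

Lemma kepler_inj x y : kepler e x = kepler e y -> x = y.
Proof.
  intros Hk; destruct (Rtotal_order x y) as [h | [h | h]]; auto;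
    [pose proof (kepler_lt x y h) | pose proof (kepler_lt y x h)]; lra.
Qed.

Lemma kepler_surj M : exists E, kepler e E = M.
Proof.
  assert (Hcont : continuity (kepler e)).
  { intro x; apply derivable_continuous_pt; exists (1 - e * cos x).
    apply is_derive_Reals, is_derive_kepler. }
  destruct (IVT (fun E => kepler e E - M) (M - 1) (M + 1)) as [E [_ HE]].
  - intro x; apply continuity_pt_minus; [apply Hcont | apply continuity_pt_const; easy].
  - lra.
  - unfold kepler; pose proof (SIN_bound (M - 1)); nra.
  - unfold kepler; pose proof (SIN_bound (M + 1)); nra.
  - exists E; lra.
Qed.

Lemma kepler_ecc_anomaly M : kepler e (ecc_anomaly e M) = M.
Proof.
  apply (epsilon_spec (inhabits 0) (fun E => E - e * sin E = M)).
  exact (kepler_surj M).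
Qed.

Lemma ecc_anomaly_kepler E : ecc_anomaly e (kepler e E) = E.
Proof. apply kepler_inj; apply kepler_ecc_anomaly. Qed.

Lemma ecc_anomaly_sin0 x : sin x = 0 -> ecc_anomaly e x = x.
Proof.
  intros Hs; rewrite <- (ecc_anomaly_kepler x) at 2; unfold kepler.
  now rewrite Hs, Rmult_0_r, Rminus_0_r.
Qed.

Lemma ecc_anomaly_lt M1 M2 : M1 < M2 -> ecc_anomaly e M1 < ecc_anomaly e M2.
Proof.
  intros HM; destruct (Rlt_or_le (ecc_anomaly e M1) (ecc_anomaly e M2)) as [h | h]; auto.
  apply Rle_lt_or_eq_dec in h as [h | h].
  - apply kepler_lt in h; rewrite !kepler_ecc_anomaly in h; lra.
  - apply (f_equal (kepler e)) in h; rewrite !kepler_ecc_anomaly in h; lra.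
Qed.

Lemma ecc_anomaly_le M1 M2 : M1 <= M2 -> ecc_anomaly e M1 <= ecc_anomaly e M2.
Proof. intros [h | ->]; [left; apply ecc_anomaly_lt | right]; auto. Qed.

Lemma continuous_ecc_anomaly M : continuous (ecc_anomaly e) M.
Proof.
  apply continuity_pt_filterlim.
  set (E := ecc_anomaly e M).
  apply (continuity_pt_recip_interv (kepler e) _ (E - 1) (E + 1)).
  - lra.
  - intros x y _ Hxy _; apply kepler_lt, Hxy.
  - intros x _ _; apply kepler_ecc_anomaly.
  - intros x H1 H2; rewrite <- (ecc_anomaly_kepler (E - 1)), <- (ecc_anomaly_kepler (E + 1)).
    split; apply ecc_anomaly_le; assumption.
  - intros x _; apply derivable_continuous_pt; exists (1 - e * cos x).
    apply is_derive_Reals, is_derive_kepler.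
  - pose proof (kepler_ecc_anomaly M) as HE; fold E in HE.
    rewrite <- HE; split; apply kepler_lt; lra.
Qed.

Lemma cos_half_ecc_anomaly_neq0 M :
  0 < M < 2 * PI -> M <> PI -> cos (ecc_anomaly e M / 2) <> 0.
Proof.
  intros HM HMpi.
  assert (HPI : ecc_anomaly e PI = PI) by (apply ecc_anomaly_sin0, sin_PI).
  assert (H0 : ecc_anomaly e 0 = 0) by (apply ecc_anomaly_sin0, sin_0).
  assert (H2 : ecc_anomaly e (2 * PI) = 2 * PI) by (apply ecc_anomaly_sin0, sin_2PI).
  destruct (Rtotal_order M PI) as [h | [h | h]]; [| contradiction |].
  - pose proof (ecc_anomaly_lt 0 M (proj1 HM)); pose proof (ecc_anomaly_lt M PI h).
    apply Rgt_not_eq, cos_gt_0; lra.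
  - pose proof (ecc_anomaly_lt PI M h); pose proof (ecc_anomaly_lt M (2 * PI) (proj2 HM)).
    apply Rlt_not_eq, cos_lt_0; lra.
Qed.

Lemma RInt_ecc_anomaly (g : R -> R) :
  (forall E, continuous g E) ->
  RInt (fun M => g (ecc_anomaly e M)) 0 (2 * PI)
  = RInt (fun E => (1 - e * cos E) * g E) 0 (2 * PI).
Proof.
  intros Hg.
  assert (K0 : kepler e 0 = 0) by (unfold kepler; rewrite sin_0; ring).
  assert (K2 : kepler e (2 * PI) = 2 * PI) by (unfold kepler; rewrite sin_2PI; ring).
  rewrite <- K0 at 1; rewrite <- K2 at 1.
  rewrite <- (RInt_comp _ (kepler e) (fun E => 1 - e * cos E)).
  - apply RInt_ext; intros x _; now rewrite ecc_anomaly_kepler.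
  - intros x _; apply (continuous_comp (ecc_anomaly e) g);
      [apply continuous_ecc_anomaly | apply Hg].
  - intros x _; split; [apply is_derive_kepler |].
    apply (ex_derive_continuous (fun E => 1 - e * cos E)); auto_derive; easy.
Qed.

End Kepler.

Lemma cos_2a_tan x : cos x <> 0 -> cos (2 * x) = (1 - tan x ^ 2) / (1 + tan x ^ 2).
Proof.
  intros Hc.
  assert (Hs : sin x ^ 2 = 1 - cos x ^ 2)
    by (rewrite <- (sin2_cos2 x); unfold Rsqr; ring).
  rewrite cos_2a; unfold tan.
  field [Hs]; split; [exact Hc | rewrite Hs; lra].
Qed.

Lemma cos_true_anomaly e M : 0 <= e < 1 ->
  cos (ecc_anomaly e M / 2) <> 0 ->
  cos (true_anomaly e M)
  = (cos (ecc_anomaly e M) - e) / (1 - e * cos (ecc_anomaly e M)).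
Proof.
  intros He Hc; unfold true_anomaly.
  set (E := ecc_anomaly e M) in *.
  set (t := tan (E / 2)); set (k := sqrt ((1 + e) / (1 - e))).
  assert (Hk : k ^ 2 = (1 + e) / (1 - e)).
  { apply pow2_sqrt, Rlt_le, Rdiv_lt_0_compat; lra. }
  assert (HcE : cos E = (1 - t ^ 2) / (1 + t ^ 2)).
  { replace E with (2 * (E / 2)) at 1 by field; now apply cos_2a_tan. }
  assert (Hca : cos (atan (k * t)) <> 0).
  { pose proof (atan_bound (k * t)); apply Rgt_not_eq, cos_gt_0; lra. }
  rewrite cos_2a_tan, tan_atan, Rpow_mult_distr, Hk, HcE by exact Hca.
  pose proof (pow2_ge_0 t).
  field; repeat split; nra.
Qed.

(* (a/r)^3 cos 2f in terms of E, from r/a = 1 - e cos E and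
   cos f = (cos E - e) / (1 - e cos E). *)
Definition cos2f_div_r3 (e E : R) : R :=
  (2 * (cos E - e) ^ 2 - (1 - e * cos E) ^ 2) / (1 - e * cos E) ^ 5.

Definition cos2f_div_r3_primitive (e E : R) : R :=
  sin E * cos E / (1 - e * cos E) ^ 2 - 2 / 3 * e * sin E ^ 3 / (1 - e * cos E) ^ 3.

Section HansenQuadrupole.

Variable e : R.
Hypothesis He : 0 <= e < 1.

Lemma hansen_m3_2_0_integrand M :
  cos (ecc_anomaly e M / 2) <> 0 ->
  powerRZ (r_over_a e M) (-3) * cos (2 * true_anomaly e M - 0 * M)
  = cos2f_div_r3 e (ecc_anomaly e M).
Proof.
  intros Hc.
  rewrite Rmult_0_l, Rminus_0_r, cos_2a_cos, cos_true_anomaly by assumption.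
  unfold r_over_a, cos2f_div_r3.
  change (powerRZ ?x (-3)) with (/ x ^ 3).
  pose proof (one_sub_ecos_gt0 e He (ecc_anomaly e M)).
  field; lra.
Qed.

Lemma is_derive_cos2f_div_r3_primitive E :
  is_derive (cos2f_div_r3_primitive e) E ((1 - e * cos E) * cos2f_div_r3 e E).
Proof.
  pose proof (one_sub_ecos_gt0 e He E) as HD.
  assert (Hs : sin E ^ 2 = 1 - cos E ^ 2)
    by (rewrite <- (sin2_cos2 E); unfold Rsqr; ring).
  unfold cos2f_div_r3_primitive, cos2f_div_r3.
  auto_derive.
  - repeat split; apply Rgt_not_eq; repeat apply Rmult_lt_0_compat; lra.
  - field [Hs]; lra.
Qed.

Lemma continuous_cos2f_div_r3 E : continuous (cos2f_div_r3 e) E.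
Proof.
  apply (ex_derive_continuous (cos2f_div_r3 e)); unfold cos2f_div_r3; auto_derive.
  pose proof (one_sub_ecos_gt0 e He E); apply Rgt_not_eq; repeat apply Rmult_lt_0_compat; lra.
Qed.

Lemma RInt_cos2f_div_r3_ecc_anomaly :
  RInt (fun M => cos2f_div_r3 e (ecc_anomaly e M)) 0 (2 * PI) = 0.
Proof.
  rewrite (RInt_ecc_anomaly e He) by exact continuous_cos2f_div_r3.
  assert (Hperiodic :
    minus (cos2f_div_r3_primitive e (2 * PI)) (cos2f_div_r3_primitive e 0) = 0).
  { unfold cos2f_div_r3_primitive, minus, plus, opp; simpl.
    rewrite sin_2PI, sin_0; field.
    split; apply Rgt_not_eq, one_sub_ecos_gt0, He. }
  apply is_RInt_unique; rewrite <- Hperiodic at 2.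
  apply (is_RInt_derive (cos2f_div_r3_primitive e)
           (fun E => (1 - e * cos E) * cos2f_div_r3 e E)); intros x _.
  - apply is_derive_cos2f_div_r3_primitive.
  - apply (ex_derive_continuous (fun E => (1 - e * cos E) * cos2f_div_r3 e E)).
    unfold cos2f_div_r3; auto_derive.
    pose proof (one_sub_ecos_gt0 e He x); apply Rgt_not_eq; repeat apply Rmult_lt_0_compat; lra.
Qed.

Lemma hansen_m3_2_0 : hansen (-3) 2 0 e = 0.
Proof.
  unfold hansen.
  set (f := fun M => powerRZ (r_over_a e M) (-3) * cos (2 * true_anomaly e M - 0 * M)).
  set (g := fun M => cos2f_div_r3 e (ecc_anomaly e M)).
  assert (Hg : forall M, continuous g M).
  { intro M; apply (continuous_comp (ecc_anomaly e) (cos2f_div_r3 e));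
      [apply continuous_ecc_anomaly, He | apply continuous_cos2f_div_r3]. }
  assert (Hfg : forall M, 0 < M < 2 * PI -> M <> PI -> g M = f M).
  { intros M HM HMpi; symmetry; apply hansen_m3_2_0_integrand.
    now apply cos_half_ecc_anomaly_neq0. }
  assert (Hex : forall a b, ex_RInt g a b) by (intros; apply (ex_RInt_continuous g); auto).
  (* the half-angle formula for f degenerates at E = pi, i.e. at M = pi *)
  pose proof PI_RGT_0.
  assert (Hf : is_RInt f 0 (2 * PI) (plus (RInt g 0 PI) (RInt g PI (2 * PI)))).
  { apply (is_RInt_Chasles f 0 PI (2 * PI)); apply (is_RInt_ext g), (RInt_correct g), Hex;
      intros M; rewrite Rmin_left, Rmax_right by lra; intros HM; apply Hfg; lra. }
  rewrite (RInt_Chasles g) in Hf by apply Hex.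
  unfold g in Hf; rewrite RInt_cos2f_div_r3_ecc_anomaly in Hf.
  rewrite (is_RInt_unique f 0 (2 * PI) 0 Hf); apply Rmult_0_r.
Qed.

End HansenQuadrupole.

Lemma hansen_opp_m0 n m e : hansen n (- m) 0 e = hansen n m 0 e.
Proof.
  unfold hansen; f_equal; apply RInt_ext; intros M _.
  rewrite opp_IZR, <- cos_neg; f_equal; f_equal; ring.
Qed.

Lemma Gcoef_2_averaged e q : 0 <= e < 1 -> (0 <= q <= 2)%Z ->
  IZR (2 - 2 * q) = 0 \/ Gcoef 2 q (2 * q - 2) e = 0.
Proof.
  intros He Hq.
  assert (q = 0 \/ q = 1 \/ q = 2)%Z as [-> | [-> | ->]] by lia.
  - right; exact (hansen_m3_2_0 e He).
  - left; reflexivity.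
  - right; transitivity (hansen (-3) 2 0 e).
    + exact (hansen_opp_m0 (-3) 2 e).
    + exact (hansen_m3_2_0 e He).
Qed.

Lemma sumZ_ext_in lo hi (f g : Z -> R) :
  (forall k, (lo <= k <= hi)%Z -> f k = g k) -> sumZ lo hi f = sumZ lo hi g.
Proof.
  intros Hfg; unfold sumZ; f_equal; apply map_ext_in.
  intros k Hk; apply in_seq in Hk; apply Hfg; lia.
Qed.

Lemma moon_term_2_averaged_omk_free Gc mk eps a e I om Om M ak ek Ik omk omk' Omk Mk
    m p s q :
  0 <= ek < 1 -> (0 <= q <= 2)%Z ->
  moon_term Gc mk eps a e I om Om M ak ek Ik omk Omk Mk 2 m p s q (2 * p - 2) (2 * q - 2)
  = moon_term Gc mk eps a e I om Om M ak ek Ik omk' Omk Mk 2 m p s q (2 * p - 2) (2 * q - 2).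
Proof.
  intros Hek Hq; unfold moon_term.
  destruct (Gcoef_2_averaged ek q Hek Hq) as [Hom | HG]; rewrite ?Hom, ?HG.
  - now rewrite !Rmult_0_l.
  - ring.
Qed.

Lemma sun_term_2_averaged_oms_free Gc ms a e I om Om M as_ es Is oms oms' Oms Ms m p h :
  0 <= es < 1 -> (0 <= h <= 2)%Z ->
  sun_term Gc ms a e I om Om M as_ es Is oms Oms Ms 2 m p h (2 * p - 2) (2 * h - 2)
  = sun_term Gc ms a e I om Om M as_ es Is oms' Oms Ms 2 m p h (2 * p - 2) (2 * h - 2).
Proof.
  intros Hes Hh; unfold sun_term.
  destruct (Gcoef_2_averaged es h Hes Hh) as [Hom | HG]; rewrite ?Hom, ?HG.
  - now rewrite !Rmult_0_l.
  - ring.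
Qed.

Theorem proposition2 :
  (forall (Gc mk eps a e I om Om M ak ek Ik omk omk' Omk Mk : R),
      0 < a -> 0 <= e < 1 -> 0 < ak -> 0 <= ek < 1 ->
      Rbar_Moon Gc mk eps a e I om Om M ak ek Ik omk Omk Mk
      = Rbar_Moon Gc mk eps a e I om Om M ak ek Ik omk' Omk Mk)
  /\
  (forall (Gc ms a e I om Om M as_ es Is oms oms' Oms Ms : R),
      0 < a -> 0 <= e < 1 -> 0 < as_ -> 0 <= es < 1 ->
      Rbar_Sun Gc ms a e I om Om M as_ es Is oms Oms Ms
      = Rbar_Sun Gc ms a e I om Om M as_ es Is oms' Oms Ms).
Proof.
  split.
  - intros Gc mk eps a e I om Om M ak ek Ik omk omk' Omk Mk _ _ _ Hek.
    unfold Rbar_Moon.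
    repeat (apply sumZ_ext_in; intros ? ?).
    now apply moon_term_2_averaged_omk_free.
  - intros Gc ms a e I om Om M as_ es Is oms oms' Oms Ms _ _ _ Hes.
    unfold Rbar_Sun.
    repeat (apply sumZ_ext_in; intros ? ?).
    now apply sun_term_2_averaged_oms_free.
Qed.
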